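(* Let $\langle A,C,d,O,v,(\prec_a)_{a\in A}\rangle$ be an infinite sequential game with $C$ finite, let $a\in A$, and assume: (1) $\prec_a$ is a strict weak order; (2) for every play $p\in C^\omega$, every increasing $\varphi:\mathbb{N}\to\mathbb{N}$ and every sequence $(s_n)_{n\in\mathbb{N}}$ of strategies of player $a$, if $g_a(p_{<\varphi(n+1)},s_{n+1})\subsetneq g_a(p_{<\varphi(n)},s_n)$ for all $n\in\mathbb{N}$, then $v(p)\in\bigcap_{n\in\mathbb{N}}g_a(p_{<\varphi(n)},s_n)$. Then for every $\gamma\in C^*$ there exists a strategy $s$ of player $a$ such that $g_a(\gamma,s)=G_a(\gamma)$.
   Context: An infinite sequential game $\langle A,C,d,O,v,(\prec_a)_{a\in A}\rangle$ consists of a non-empty set of agents $A$, a non-empty set of choices $C$, $d:C^*\to A$ (the agent choosing after each finite history), a non-empty set of outcomes $O$, $v:C^\omega\to O$, and binary relations $\prec_a$ on $O$ (preferences). A strategy of $a$ is a function $s:d^{-1}(\{a\})\to C$. For a partial function $t:\subseteq C^*\to C$, let $P(t)$ be the set of plays $p(\sigma)$ (where $p_n=\sigma(p_{<n})$) over all total $\sigma:C^*\to C$ extending $t$. For $\gamma\in C^*$ and a strategy $s$ of $a$, let $s|_{\gamma}$ be the restriction of $s$ to histories in $d^{-1}(\{a\})$ extending $\gamma$, and define the guarantee $g_a(\gamma,s):=\{o\in O\mid\exists p\in P(s|_\gamma)\cap\gamma C^\omega,\ \neg(o\prec_a v(p))\}$ and the best guarantee $G_a(\gamma):=\bigcap_s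 g_a(\gamma,s)$ (intersection over all strategies $s$ of $a$). $p_{<n}$ denotes the length-$n$ prefix of $p$. A strict weak order is an irreflexive, transitive relation $\prec$ such that $\neg(x\prec y)\wedge\neg(y\prec z)$ implies $\neg(x\prec z)$. *)

From Stdlib Require Import List Arith FinFun.
Import ListNotations.

(* Finite histories C^* are lists (chronological order); plays C^omega are nat -> C. *)

Definition pre {C : Type} (p : nat -> C) (n : nat) : list C :=
  map p (seq 0 n).

Definition hprefix {C : Type} (g h : list C) : Prop := exists k, h = g ++ k.

Definition strategy {A C : Type} (d : list C -> A) (a : A) : Type :=
  {h : list C | d h = a} -> C.

Record pfun (C : Type) := PFun { pdom : list C -> Prop; papp : {h : list C | pdom h} -> C }.
Arguments pdom {C} _ _.
Arguments papp {C} _ _.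

Definition extends {C : Type} (sigma : list C -> C) (t : pfun C) : Prop :=
  forall x : {h : list C | pdom t h}, sigma (proj1_sig x) = papp t x.

Definition is_play_of {C : Type} (sigma : list C -> C) (p : nat -> C) : Prop :=
  forall n, p n = sigma (pre p n).

Definition Pl {C : Type} (t : pfun C) (p : nat -> C) : Prop :=
  exists sigma : list C -> C, extends sigma t /\ is_play_of sigma p.

Definition restr {A C : Type} (d : list C -> A) (a : A) (s : strategy d a)
  (gamma : list C) : pfun C :=
  PFun C (fun h => d h = a /\ hprefix gamma h)
         (fun x => s (exist _ (proj1_sig x) (proj1 (proj2_sig x)))).

Definition guarantee {A C O : Type} (d : list C -> A) (v : (nat -> C) -> O)
  (prec : A -> O -> O -> Prop) (a : A) (gamma : list C) (s : strategy d a) (o : O) : Prop :=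
  exists p, Pl (restr d a s gamma) p /\ pre p (length gamma) = gamma /\ ~ prec a o (v p).

Definition best_guarantee {A C O : Type} (d : list C -> A) (v : (nat -> C) -> O)
  (prec : A -> O -> O -> Prop) (a : A) (gamma : list C) (o : O) : Prop :=
  forall s : strategy d a, guarantee d v prec a gamma s o.

Definition strict_weak_order {O : Type} (lt : O -> O -> Prop) : Prop :=
  (forall x, ~ lt x x) /\
  (forall x y z, lt x y -> lt y z -> lt x z) /\
  (forall x y z, ~ lt x y -> ~ lt y z -> ~ lt x z).

Definition strict_subset {O : Type} (S T : O -> Prop) : Prop :=
  (forall o, S o -> T o) /\ ~ (forall o, T o -> S o).

From Stdlib Require Import List Arith FinFun Lia Wf_nat.
From Stdlib Require Import Classical ClassicalEpsilon ProofIrrelevance.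
Import ListNotations.

(* Fix [gamma] and let U := G_a(gamma). Call a history h securable if some
   strategy guarantees at h a subset of U, and critical if it is not securable
   although G_a(h) is a subset of U. Player a follows, after the shortest
   securable prefix of the current history, a strategy securing U from it, and
   otherwise keeps the history critical: at her own nodes some child is critical,
   since guarantees are up-closed sets for the strict weak order, hence totally
   ordered by inclusion, and finitely many children have a smallest best
   guarantee. A play that never reaches a securable prefix stays critical, and
   along a critical play every guarantee can be strictly improved one step
   further, so hypothesis (2) places its value in every g_a(gamma, t), i.e. in
   G_a(gamma). *)

Section Prefixes.
Variables (C : Type) (p : nat -> C).

Lemma pre_length n : length (pre p n) = n.
Proof. unfold pre. rewrite length_map, length_seq. reflexivity. Qed.

Lemma pre_S n : pre p (S n) = pre p n ++ [p n].
Proof. unfold pre. rewrite seq_S, map_app. reflexivity. Qed.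

Lemma pre_add m k : pre p (m + k) = pre p m ++ map p (seq m k).
Proof. unfold pre. rewrite seq_app, map_app. reflexivity. Qed.

Lemma firstn_pre m n : m <= n -> firstn m (pre p n) = pre p m.
Proof.
  intro Hmn. replace n with (m + (n - m)) by lia.
  rewrite pre_add, firstn_app, pre_length, Nat.sub_diag,
    firstn_all2 by (rewrite pre_length; lia).
  apply app_nil_r.
Qed.

Lemma hprefix_pre h n :
  hprefix h (pre p n) <-> length h <= n /\ pre p (length h) = h.
Proof.
  split.
  - intros [k Hk].
    assert (Hn : n = length h + length k).
    { rewrite <- (pre_length n), Hk, length_app. reflexivity. }
    split; [lia|].
    rewrite <- (firstn_pre (length h) n), Hk by lia.
    rewrite firstn_app, Nat.sub_diag, firstn_all2 by lia. apply app_nil_r.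
  - intros [Hn Hh]. exists (map p (seq (length h) (n - length h))).
    rewrite <- Hh at 1. rewrite <- pre_add. f_equal. lia.
Qed.

End Prefixes.

Lemma hprefix_app_l (C : Type) (h x y : list C) : hprefix (h ++ x) y -> hprefix h y.
Proof. intros [k Hk]. exists (x ++ k). rewrite Hk, app_assoc. reflexivity. Qed.

Definition least (P : nat -> Prop) (n : nat) : Prop := P n /\ forall m, P m -> n <= m.

Lemma least_exists (P : nat -> Prop) n : P n -> exists m, least P m.
Proof.
  intro Hn.
  destruct (dec_inh_nat_subset_has_unique_least_element P (fun m => classic (P m))
              (ex_intro _ n Hn)) as [m [Hm _]].
  exists m. exact Hm.
Qed.

Lemma least_unique (P : nat -> Prop) m n : least P m -> least P n -> m = n.
Proof. intros [Hm Hmin] [Hn Hnmin]. apply Nat.le_antisymm; auto. Qed.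

Section Guarantees.
Variables (A C O : Type) (d : list C -> A) (v : (nat -> C) -> O)
  (prec : A -> O -> O -> Prop) (a : A).

Local Notation strat := (strategy d a).
Local Notation g := (guarantee d v prec a).
Local Notation G := (best_guarantee d v prec a).

Lemma strategy_at_eq (s : strat) h h' (H : d h = a) (H' : d h' = a) :
  h = h' -> s (exist _ h H) = s (exist _ h' H').
Proof. intros <-. f_equal. f_equal. apply proof_irrelevance. Qed.

Definition consistent (s : strat) (gamma : list C) (p : nat -> C) : Prop :=
  forall n (H : d (pre p n) = a),
    hprefix gamma (pre p n) -> p n = s (exist _ (pre p n) H).

Lemma Pl_restr_iff_consistent s gamma p :
  Pl (restr d a s gamma) p <-> consistent s gamma p.
Proof.
  split.
  - intros [sigma [Hext Hplay]] n H Hpre. rewrite Hplay.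
    specialize (Hext (exist _ (pre p n) (conj H Hpre))). simpl in Hext.
    rewrite Hext. apply strategy_at_eq. reflexivity.
  - intros Hcons.
    (* Off the domain of s|_gamma, follow [p] itself. *)
    exists (fun h => match excluded_middle_informative (d h = a /\ hprefix gamma h) with
             | left H => s (exist _ h (proj1 H))
             | right _ => p (length h) end).
    split.
    + intros [h Hh]. simpl. destruct (excluded_middle_informative _) as [H|H].
      * apply strategy_at_eq. reflexivity.
      * contradiction.
    + intro n. destruct (excluded_middle_informative _) as [[H Hpre]|H].
      * apply Hcons, Hpre.
      * rewrite pre_length. reflexivity.
Qed.

Lemma guarantee_iff h s o : g h s o <->
  exists p, consistent s h p /\ pre p (length h) = h /\ ~ prec a o (v p).
Proof.
  unfold guarantee.
  split; intros [p [Hp Hrest]]; exists p; rewrite Pl_restr_iff_consistent in *; auto.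
Qed.

Lemma guarantee_parent (s : strat) h c :
  (forall H : d h = a, s (exist _ h H) = c) ->
  forall o, g (h ++ [c]) s o -> g h s o.
Proof.
  intros Hs o Ho. apply guarantee_iff in Ho. apply guarantee_iff.
  destruct Ho as [p [Hcons [Hp Ho]]]. exists p.
  rewrite length_app, Nat.add_1_r, pre_S in Hp.
  apply app_inj_tail in Hp. destruct Hp as [Hp Hpc].
  repeat split; auto.
  intros n H Hpre. apply hprefix_pre in Hpre as Hn. destruct Hn as [Hn _].
  destruct (Nat.eq_dec n (length h)) as [->|Hneq].
  - assert (Hh : d h = a) by (rewrite <- Hp; exact H).
    rewrite Hpc, <- (Hs Hh). apply strategy_at_eq. symmetry. exact Hp.
  - apply Hcons, hprefix_pre. rewrite length_app. split; [simpl; lia|].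
    rewrite Nat.add_1_r, pre_S, Hp, Hpc. reflexivity.
Qed.

Lemma guarantee_own_move (s : strat) h (H : d h = a) :
  forall o, g h s o -> g (h ++ [s (exist _ h H)]) s o.
Proof.
  intros o Ho. apply guarantee_iff in Ho. apply guarantee_iff.
  destruct Ho as [p [Hcons [Hp Ho]]]. exists p.
  assert (Hpc : p (length h) = s (exist _ h H)).
  { assert (H0 : d (pre p (length h)) = a) by (rewrite Hp; exact H).
    rewrite (Hcons (length h) H0).
    - apply strategy_at_eq. exact Hp.
    - rewrite Hp. exists []. symmetry. apply app_nil_r. }
  repeat split; auto.
  - intros n Hn Hpre. apply Hcons. eapply hprefix_app_l. exact Hpre.
  - rewrite length_app, Nat.add_1_r, pre_S, Hp, Hpc. reflexivity.
Qed.

Lemma guarantee_local (s s' : strat) h :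
  (forall h' (H : d h' = a), hprefix h h' -> s (exist _ h' H) = s' (exist _ h' H)) ->
  forall o, g h s o -> g h s' o.
Proof.
  intros Hagree o Ho. apply guarantee_iff in Ho. apply guarantee_iff.
  destruct Ho as [p [Hcons [Hp Ho]]]. exists p. repeat split; auto.
  intros n H Hpre. rewrite <- Hagree by exact Hpre. apply Hcons, Hpre.
Qed.

Lemma best_guarantee_parent_other h c :
  d h <> a -> forall o, G (h ++ [c]) o -> G h o.
Proof.
  intros Ha o Ho s. apply (guarantee_parent s h c); [intro H; contradiction | apply Ho].
Qed.

Lemma best_guarantee_parent_own h (Ha : d h = a) c :
  (forall c' o, G (h ++ [c]) o -> G (h ++ [c']) o) ->
  forall o, G (h ++ [c]) o -> G h o.
Proof.
  intros Hmin o Ho s. apply (guarantee_parent s h (s (exist _ h Ha))).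
  - intro H. apply strategy_at_eq. reflexivity.
  - apply (Hmin _ o Ho).
Qed.

Definition securable (h : list C) (U : O -> Prop) : Prop :=
  exists t : strat, forall o, g h t o -> U o.

(* Play [c] at [h], and [t] everywhere else. *)
Lemma securable_parent_own h (Ha : d h = a) c U :
  securable (h ++ [c]) U -> securable h U.
Proof.
  intros [t Ht].
  exists (fun x => if excluded_middle_informative (proj1_sig x = h) then c else t x).
  intros o Ho. apply Ht.
  apply (guarantee_own_move _ h Ha) in Ho. simpl in Ho.
  destruct (excluded_middle_informative (h = h)) as [_|Hneq]; [|contradiction].
  revert Ho. apply guarantee_local.
  intros h' H Hpre. simpl.
  destruct (excluded_middle_informative (h' = h)) as [->|_]; [exfalso|reflexivity].
  destruct Hpre as [k Hk]. apply (f_equal (@length C)) in Hk.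
  rewrite !length_app in Hk. simpl in Hk. lia.
Qed.

Hypothesis Hswo : strict_weak_order (prec a).

Definition up_closed (S : O -> Prop) : Prop :=
  forall o o', S o -> ~ prec a o' o -> S o'.

Lemma guarantee_up_closed h s : up_closed (g h s).
Proof.
  intros o o' Ho Ho'. apply guarantee_iff in Ho. apply guarantee_iff.
  destruct Ho as [p [Hcons [Hp Ho]]]. exists p. repeat split; auto.
  destruct Hswo as [_ [_ Hneg]]. eapply Hneg; eauto.
Qed.

Lemma best_guarantee_up_closed h : up_closed (G h).
Proof. intros o o' Ho Ho' s. exact (guarantee_up_closed h s o o' (Ho s) Ho'). Qed.

Lemma up_closed_total (S T : O -> Prop) : up_closed S -> up_closed T ->
  forall o1, S o1 -> ~ T o1 -> forall o2, T o2 -> S o2.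
Proof.
  intros HS HT o1 HS1 HT1 o2 HT2. destruct Hswo as [Hirr [Htr _]].
  destruct (classic (prec a o2 o1)) as [Hlt|Hnlt].
  - exfalso. apply HT1, (HT o2 o1 HT2). intro Hlt'. apply (Hirr o1). eauto.
  - exact (HS o1 o2 HS1 Hnlt).
Qed.

Lemma up_closed_list_least (F : C -> O -> Prop) (HF : forall c, up_closed (F c))
  (l : list C) (x : C) :
  In x l -> exists c, In c l /\ forall c', In c' l -> forall o, F c o -> F c' o.
Proof.
  revert x. induction l as [|y l IH]; intros x Hx; [destruct Hx|].
  destruct l as [|z l'].
  - exists y. split; [left; reflexivity|].
    intros c' [->|[]] o Ho. exact Ho.
  - destruct (IH z (or_introl eq_refl)) as [c [Hc Hmin]].
    destruct (classic (forall o, F y o -> F c o)) as [Hyc|Hyc].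
    + exists y. split; [left; reflexivity|].
      intros c' [->|Hc'] o Ho; [exact Ho|]. apply Hmin; auto.
    + apply not_all_ex_not in Hyc. destruct Hyc as [o Ho].
      apply imply_to_and in Ho. destruct Ho as [Fy Fc].
      exists c. split; [right; exact Hc|].
      intros c' [<-|Hc'] o' Ho'.
      * exact (up_closed_total _ _ (HF y) (HF c) o Fy Fc o' Ho').
      * apply Hmin; auto.
Qed.

Lemma best_child_exists (HC : inhabited C) (HCfin : Finite C) h :
  exists c, forall c' o, G (h ++ [c]) o -> G (h ++ [c']) o.
Proof.
  destruct HC as [c0]. destruct HCfin as [l Hl].
  destruct (up_closed_list_least (fun c => G (h ++ [c]))
              (fun c => best_guarantee_up_closed _) l c0 (Hl c0)) as [c [_ Hc]].
  exists c. intros c'. apply Hc, Hl.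
Qed.

Lemma strict_descent (U : O -> Prop) h h' (t : strat) :
  ~ securable h U -> (forall o, G h' o -> U o) ->
  exists t', strict_subset (g h' t') (g h t).
Proof.
  intros Hinsec HG.
  assert (Ht : ~ (forall o, g h t o -> U o)) by (intro Ht; apply Hinsec; exists t; exact Ht).
  apply not_all_ex_not in Ht. destruct Ht as [o Ho]. apply imply_to_and in Ho.
  destruct Ho as [Hgo HUo].
  assert (HGo : ~ G h' o) by auto.
  apply not_all_ex_not in HGo. destruct HGo as [t' Ht'].
  exists t'. split.
  - exact (up_closed_total _ _ (guarantee_up_closed h t) (guarantee_up_closed h' t')
             o Hgo Ht').
  - intro Hsub. apply Ht', Hsub, Hgo.
Qed.

Section Gluing.
Hypothesis HC : inhabited C.
Hypothesis HCfin : Finite C.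
Hypothesis Hchain : forall (p : nat -> C) (phi : nat -> nat) (ss : nat -> strat),
  (forall n, phi n < phi (S n)) ->
  (forall n, strict_subset (g (pre p (phi (S n))) (ss (S n))) (g (pre p (phi n)) (ss n))) ->
  forall n, g (pre p (phi n)) (ss n) (v p).
Variables (gamma : list C) (U : O -> Prop).

Definition critical (h : list C) : Prop :=
  (forall o, G h o -> U o) /\ ~ securable h U.

Lemma critical_child_other h c :
  d h <> a -> critical h -> ~ securable (h ++ [c]) U -> critical (h ++ [c]).
Proof.
  intros Ha [HU _] Hc. split; [|exact Hc].
  intros o Ho. apply HU. exact (best_guarantee_parent_other h c Ha o Ho).
Qed.

Lemma critical_child_own h : d h = a -> critical h -> exists c, critical (h ++ [c]).
Proof.
  intros Ha [HU Hinsec].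
  destruct (best_child_exists HC HCfin h) as [c Hc].
  exists c. split.
  - intros o Ho. apply HU. exact (best_guarantee_parent_own h Ha c Hc o Ho).
  - intro Hsec. apply Hinsec. exact (securable_parent_own h Ha c U Hsec).
Qed.

Lemma strategy_inhabited : inhabited strat.
Proof. destruct HC as [c]. exact (inhabits (fun _ => c)). Qed.

Definition critical_move (h : list C) : C :=
  epsilon HC (fun c => critical (h ++ [c])).

Definition securing_strategy (h : list C) : strat :=
  epsilon strategy_inhabited (fun t => forall o, g h t o -> U o).

Definition securable_prefix (h : list C) (k : nat) : Prop :=
  length gamma <= k <= length h /\ securable (firstn k h) U.

Definition glued (x : {h : list C | d h = a}) : C :=
  let h := proj1_sig x in
  if excluded_middle_informative (exists k, securable_prefix h k)
  then securing_strategy (firstn (epsilon (inhabits 0) (least (securable_prefix h))) h) x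
  else critical_move h.

Lemma securable_prefix_pre p m k : securable_prefix (pre p m) k <->
  k <= m /\ length gamma <= k /\ securable (pre p k) U.
Proof.
  unfold securable_prefix. rewrite pre_length.
  split.
  - intros [Hk Hsec]. rewrite firstn_pre in Hsec by lia. repeat split; tauto || lia.
  - intros (Hkm & Hk & Hsec). rewrite firstn_pre by exact Hkm. repeat split; tauto || lia.
Qed.

Lemma securing_strategy_spec h :
  securable h U -> forall o, g h (securing_strategy h) o -> U o.
Proof. exact (epsilon_spec strategy_inhabited (fun t => forall o, g h t o -> U o)). Qed.

Lemma glued_after_securable_prefix p n m (H : d (pre p m) = a) :
  least (fun k => length gamma <= k /\ securable (pre p k) U) n -> n <= m ->
  glued (exist _ (pre p m) H) = securing_strategy (pre p n) (exist _ (pre p m) H).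
Proof.
  intros [[Hn Hsec] Hmin] Hnm.
  assert (Hleast : least (securable_prefix (pre p m)) n).
  { split.
    - apply securable_prefix_pre. auto.
    - intros k Hk. apply securable_prefix_pre in Hk. apply Hmin. tauto. }
  unfold glued; simpl.
  destruct (excluded_middle_informative _) as [Hex|Hnex].
  - assert (Heps : epsilon (inhabits 0) (least (securable_prefix (pre p m))) = n).
    { apply (least_unique (securable_prefix (pre p m))); [|exact Hleast].
      apply epsilon_spec. exists n. exact Hleast. }
    rewrite Heps, firstn_pre by exact Hnm. reflexivity.
  - exfalso. apply Hnex. exists n. apply Hleast.
Qed.

Lemma glued_without_securable_prefix p m (H : d (pre p m) = a) :
  (forall k, length gamma <= k -> ~ securable (pre p k) U) ->
  glued (exist _ (pre p m) H) = critical_move (pre p m).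
Proof.
  intro Hinsec. unfold glued; simpl.
  destruct (excluded_middle_informative _) as [[k Hk]|_]; [exfalso|reflexivity].
  apply securable_prefix_pre in Hk. destruct Hk as (_ & Hk & Hsec).
  exact (Hinsec k Hk Hsec).
Qed.

Lemma consistent_glued_securable p n :
  consistent glued gamma p -> pre p (length gamma) = gamma ->
  least (fun k => length gamma <= k /\ securable (pre p k) U) n ->
  consistent (securing_strategy (pre p n)) (pre p n) p.
Proof.
  intros Hcons Hp Hleast m H Hpre.
  apply hprefix_pre in Hpre. rewrite pre_length in Hpre. destruct Hpre as [Hnm _].
  assert (Hn : length gamma <= n) by apply Hleast.
  rewrite (Hcons m H).
  - apply glued_after_securable_prefix; assumption.
  - apply hprefix_pre. split; [lia | exact Hp].
Qed.

Lemma consistent_glued_critical p :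
  consistent glued gamma p -> pre p (length gamma) = gamma ->
  (forall o, G gamma o -> U o) ->
  (forall k, length gamma <= k -> ~ securable (pre p k) U) ->
  forall k, critical (pre p (length gamma + k)).
Proof.
  intros Hcons Hp HG Hinsec. induction k as [|k IH].
  - rewrite Nat.add_0_r. split; [rewrite Hp; exact HG | apply Hinsec; lia].
  - rewrite Nat.add_succ_r, pre_S.
    destruct (classic (d (pre p (length gamma + k)) = a)) as [Ha|Ha].
    + rewrite (Hcons _ Ha), glued_without_securable_prefix by
        (exact Hinsec || (apply hprefix_pre; split; [lia | exact Hp])).
      apply (epsilon_spec HC (fun c => critical (pre p (length gamma + k) ++ [c]))).
      exact (critical_child_own _ Ha IH).
    + apply critical_child_other; [exact Ha | exact IH |].
      rewrite <- pre_S. apply Hinsec. lia.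
Qed.

Lemma critical_play_value p n :
  (forall k, critical (pre p (n + k))) -> forall t, g (pre p n) t (v p).
Proof.
  intros Hcrit t.
  set (improve := fun k (t' : strat) => epsilon strategy_inhabited (fun t'' =>
         strict_subset (g (pre p (n + S k)) t'') (g (pre p (n + k)) t'))).
  set (ss := fun k => nat_rect (fun _ => strat) t improve k).
  assert (Hss : forall k,
             strict_subset (g (pre p (n + S k)) (ss (S k))) (g (pre p (n + k)) (ss k))).
  { intro k. change (ss (S k)) with (improve k (ss k)). apply epsilon_spec.
    destruct (Hcrit k) as [_ Hinsec]. destruct (Hcrit (S k)) as [HG _].
    exact (strict_descent U _ _ (ss k) Hinsec HG). }
  assert (Hphi : forall k, n + k < n + S k) by (intro k; lia).
  pose proof (Hchain p (fun k => n + k) ss Hphi Hss 0) as Hv.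
  rewrite Nat.add_0_r in Hv. exact Hv.
Qed.

Theorem glued_secures :
  (forall o, G gamma o -> U o) -> forall o, g gamma glued o -> U o.
Proof.
  intros HG o Ho. apply guarantee_iff in Ho. destruct Ho as [p [Hcons [Hp Ho]]].
  destruct (classic (exists n, length gamma <= n /\ securable (pre p n) U))
    as [[n0 Hn0]|Hnone].
  - destruct (least_exists (fun k => length gamma <= k /\ securable (pre p k) U) n0 Hn0)
      as [n Hleast].
    assert (Hsec : securable (pre p n) U) by apply Hleast.
    apply (securing_strategy_spec _ Hsec), guarantee_iff.
    exists p. split; [exact (consistent_glued_securable _ _ Hcons Hp Hleast)|].
    split; [rewrite pre_length; reflexivity | exact Ho].
  - assert (Hinsec : forall k, length gamma <= k -> ~ securable (pre p k) U)
      by (intros k Hk Hsec; apply Hnone; exists k; auto).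
    apply HG. intro t. apply (guarantee_up_closed gamma t (v p) o); [|exact Ho].
    rewrite <- Hp. apply critical_play_value.
    exact (consistent_glued_critical _ Hcons Hp HG Hinsec).
Qed.

End Gluing.
End Guarantees.

Theorem lemma20 (A C O : Type) (d : list C -> A) (v : (nat -> C) -> O)
  (prec : A -> O -> O -> Prop)
  (HCne : inhabited C) (HCfin : Finite C) (a : A)
  (H1 : strict_weak_order (prec a))
  (H2 : forall (p : nat -> C) (phi : nat -> nat) (ss : nat -> strategy d a),
        (forall n, phi n < phi (S n)) ->
        (forall n, strict_subset (guarantee d v prec a (pre p (phi (S n))) (ss (S n)))
                                 (guarantee d v prec a (pre p (phi n)) (ss n))) ->
        forall n, guarantee d v prec a (pre p (phi n)) (ss n) (v p)) :
  forall gamma : list C, exists s : strategy d a,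
    forall o, guarantee d v prec a gamma s o <-> best_guarantee d v prec a gamma o.
Proof.
  intro gamma.
  exists (glued A C O d v prec a HCne gamma (best_guarantee d v prec a gamma)).
  intro o. split.
  - apply (glued_secures A C O d v prec a H1 HCne HCfin H2). auto.
  - intro Ho. apply Ho.
Qed.
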